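(* Let $k\in\mathbb C\setminus\mathbb Q$, $n,m\in\mathbb Z_{>0}$, $p_0=n+k^{-1}m$. Let $\alpha\in\mathcal P_{n,m}$ and let $E$ be its $\mathcal E$-equivalence class. Then: 1) $E\subset\mathcal P_{n,m}$. 2) $E$ contains a minimal bipartition $\alpha_m$ and a maximal bipartition $\alpha_M$ such that $\alpha_m\subset\beta\subset\alpha_M$ for every $\beta\in E$. They are characterised within $E$ by the properties $\lambda\cap\theta(\mu)=\emptyset$ (for $\alpha_m=(\lambda,\mu)$) and $\lambda\cup\theta(\mu)=\pi(n,m)$ (for $\alpha_M=(\lambda,\mu)$), respectively. 3) Write $\alpha_m=(\lambda_m,\mu_m)$, $\alpha_M=(\lambda_M,\mu_M)$ and let $\lambda_M\setminus\lambda_m=\nu_1\cup\dots\cup\nu_r$ and $\mu_M\setminus\mu_m=\tau_1\cup\dots\cup\tau_s$ be the decompositions of these skew diagrams into connected components. Then all $\nu_i,\tau_j\subset\pi(n,m)$, $r=s$, and after a reordering $\theta(\nu_i)=\tau_i$ for $i=1,\dots,r$. 4) Every element $\beta\in E$ can be written uniquely in the form $\beta=\alpha_m\cup(\nu_{a_1},\tau_{a_1})\cup\dots\cup(\nu_{a_l},\tau_{a_l})$ with $\{a_1,\dots,a_l\}\subset\{1,\dots,r\}$; conversely every set of this form is a bipartition belonging to $E$. In particular $E$ has exactly $2^r$ elements.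
   Context: Partitions are identified with Young diagrams, i.e. finite sets of boxes $(i,j)\in\mathbb Z_{>0}^2$ ($i$ = row, $j$ = column) closed under moving up or left; a bipartition is a pair $(\lambda,\mu)$ of partitions, with inclusion and set operations (union, intersection, difference) taken componentwise. Connected components of a set of boxes are taken with respect to boxes sharing an edge. For a box $x=(i,j)$, $c(x,a)=(j-1)+k(i-1)+a$, and $b_r(\alpha,k,p_0)=\sum_{x\in\lambda}c(x,0)^{r-1}+(-1)^r\sum_{y\in\mu}c(y,1+k-kp_0)^{r-1}$ for $r\ge1$. Bipartitions are $\mathcal E$-equivalent if all their $b_r$, $r\ge1$, coincide. $\pi(n,m)=\{(i,j):1\le i\le n,1\le j\le m\}$, $\theta(i,j)=(n-i+1,m-j+1)$ on $\pi(n,m)$, and $\mathcal P_{n,m}$ is the set of bipartitions $(\lambda,\mu)$ with $\lambda,\mu\subset\pi(n,m)$. *)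

From HB Require Import structures.
From mathcomp Require Import all_boot all_order all_algebra.
From mathcomp Require Import finmap.
From mathcomp Require Import complex.
From mathcomp Require Import reals.
Set Implicit Arguments. Unset Strict Implicit. Unset Printing Implicit Defensive.
Import Order.TTheory GRing.Theory Num.Theory.
Local Open Scope fset_scope.

(* A box (i,j) : i = row, j = column, both >= 1. *)
Definition box := (nat * nat)%type.
Definition boxes := {fset box}.

Definition is_partition (l : boxes) : Prop :=
  forall x : box, x \in l ->
    [/\ (0 < x.1)%N, (0 < x.2)%N,
        (1 < x.1)%N -> (x.1.-1, x.2) \in l
      & (1 < x.2)%N -> (x.1, x.2.-1) \in l].

Definition bipart := (boxes * boxes)%type.

Definition is_bipartition (a : bipart) : Prop :=
  is_partition a.1 /\ is_partition a.2.

Definition bsubset (a b : bipart) : bool := (a.1 `<=` b.1) && (a.2 `<=` b.2).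
Definition bunion (a b : bipart) : bipart := (a.1 `|` b.1, a.2 `|` b.2).

Definition in_pi (n m : nat) (x : box) : bool :=
  [&& (1 <= x.1 <= n)%N & (1 <= x.2 <= m)%N].
Definition pi_nm (n m : nat) : boxes :=
  [fset x in [seq (i, j) | i <- iota 1 n, j <- iota 1 m]].

Definition theta (n m : nat) (x : box) : box := (n - x.1 + 1, m - x.2 + 1)%N.
Definition theta_set (n m : nat) (A : boxes) : boxes := [fset theta n m x | x in A].

Definition in_Pnm (n m : nat) (a : bipart) : Prop :=
  is_bipartition a /\ a.1 `<=` pi_nm n m /\ a.2 `<=` pi_nm n m.

Section Content.
Variable (R : realType).
Local Open Scope ring_scope.

Definition cont (k : complex R) (x : box) (a : complex R) : complex R :=
  (x.2.-1)%:R + k * (x.1.-1)%:R + a.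

Definition bpow (r : nat) (alpha : bipart) (k p0 : complex R) : complex R :=
  \sum_(x <- alpha.1) cont k x 0 ^+ r.-1
  + (-1) ^+ r * \sum_(y <- alpha.2) cont k y (1 + k - k * p0) ^+ r.-1.

Definition Eequiv (k p0 : complex R) (alpha beta : bipart) : Prop :=
  forall r : nat, (0 < r)%N -> bpow r alpha k p0 = bpow r beta k p0.
End Content.

Definition adj (x y : box) : bool :=
  ((x.1 == y.1) && ((x.2 == y.2.+1) || (y.2 == x.2.+1))) ||
  ((x.2 == y.2) && ((x.1 == y.1.+1) || (y.1 == x.1.+1))).

Definition is_component (S C : boxes) : Prop :=
  [/\ C `<=` S, C != fset0,
      (forall x y, x \in C -> y \in C ->
         exists p : seq box, [&& path adj x p, last x p == y & all (fun z => z \in C) p])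
    & (forall x y, x \in C -> y \in S -> adj x y -> y \in C)].

Definition famU (r : nat) (F : 'I_r -> boxes) (A : {set 'I_r}) : boxes :=
  \bigcup_(i <- enum A) F i.

From HB Require Import structures.
From mathcomp Require Import all_boot all_order all_algebra.
From mathcomp Require Import finmap complex reals boolp.
From mathcomp Require Import zify ring.
Import GRing.Theory Num.Theory.
Local Open Scope fset_scope.
Set Implicit Arguments. Unset Strict Implicit.

(* Contents become lattice points: [cont k x 0 = zk (lam_pt x)] and the shifted content of a
   box [y] of the second partition is [- zk (mu_pt y)], where [zk (a, b) = a + k b] is injective
   as [k] is irrational, and a [lam_pt] equals a [mu_pt] exactly for boxes that are [theta]-images
   of each other in [pi(n,m)].  Power sums determine a multiset in characteristic 0, so [beta] is
   E-equivalent to [alpha] iff the points of (lambda_alpha, mu_beta) and of (lambda_beta, mu_alpha)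
   agree as multisets, i.e. iff [beta] lies in [pi(n,m)] and [x \in lambda] - [theta x \in mu]
   is the same for [alpha] and [beta] at every box [x].  So [beta] agrees with [alpha] on the pairs
   [(x, theta x)] of which [alpha] contains exactly one box, and on the remaining free boxes
   contains both or neither; it is a bipartition iff the boxes where it contains both form a union
   of connected components of the free region. *)

Lemma adj_sym : symmetric adj.
Proof. by case=> a b [c d]; rewrite /adj /=; apply/idP/idP; lia. Qed.

Inductive reach (S : boxes) (x : box) : box -> Prop :=
| reach_refl : reach S x x
| reach_step y z : reach S x y -> z \in S -> adj y z -> reach S x z.

Lemma reach_mem S x y : reach S x y -> x \in S -> y \in S.
Proof. by case. Qed.

Lemma reach_trans S x y z : reach S x y -> reach S y z -> reach S x z.
Proof. by move=> hxy; elim=> // a b _ hxa bS ab; apply: reach_step hxa bS ab. Qed.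

Lemma reach_sym S x y : x \in S -> reach S x y -> reach S y x.
Proof.
move=> xS; elim=> [|a b hxa hax bS ab]; first exact: reach_refl.
apply: reach_trans hax; apply: reach_step (reach_refl _ _) _ _.
  exact: reach_mem hxa xS.
by rewrite adj_sym.
Qed.

Lemma reach_path S x y : reach S x y -> exists p : seq box,
  [&& path adj x p, last x p == y & all (fun z => (z \in S) && `[< reach S x z >]) p].
Proof.
elim=> [|a b hxa [p /and3P[hp /eqP hl ha]] bS ab]; first by exists [::]; rewrite /= eqxx.
exists (rcons p b); rewrite rcons_path last_rcons all_rcons hp hl ab ha bS eqxx /= andbT.
by apply/asboolP; apply: reach_step hxa bS ab.
Qed.

Definition component (S : boxes) (x : box) : boxes := [fset y in S | `[< reach S x y >]].

Lemma in_component S x y : (y \in component S x) = (y \in S) && `[< reach S x y >].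
Proof. by rewrite !inE. Qed.

Lemma component_refl S x : x \in S -> x \in component S x.
Proof. by move=> xS; rewrite in_component xS; apply/asboolP; apply: reach_refl. Qed.

Lemma is_component_component S x : x \in S -> is_component S (component S x).
Proof.
move=> xS; split.
- by apply/fsubsetP => y; rewrite in_component => /andP[].
- by apply/fset0Pn; exists x; apply: component_refl.
- move=> y1 y2; rewrite !in_component => /andP[_ /asboolP h1] /andP[_ /asboolP h2].
  have [p /and3P[hp hl ha]] := reach_path (reach_trans (reach_sym xS h1) h2).
  exists p; rewrite hp hl; apply: sub_all ha => z /andP[zS /asboolP hz].
  by rewrite in_component zS; apply/asboolP; apply: reach_trans h1 hz.
- move=> y z; rewrite !in_component => /andP[_ /asboolP hy] zS yz.
  by rewrite zS; apply/asboolP; apply: reach_step hy zS yz.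
Qed.

Lemma is_component_path S C x p : is_component S C -> x \in C ->
  path adj x p -> all (mem S) p -> last x p \in C.
Proof.
case=> _ _ _ hcl; elim: p x => [|a p IH] x //= xC /andP[xa hp] /andP[aS hS].
by apply: IH hp hS; apply: hcl xa.
Qed.

Lemma is_component_eq S C1 C2 x : is_component S C1 -> is_component S C2 ->
  x \in C1 -> x \in C2 -> C1 = C2.
Proof.
suff sub D1 D2 : is_component S D1 -> is_component S D2 ->
    x \in D1 -> x \in D2 -> D1 `<=` D2.
  by move=> h1 h2 x1 x2; apply/eqP; rewrite eqEfsubset !sub.
move=> [sub1 _ conn1 _] h2 x1 x2; apply/fsubsetP => y y1.
have [p /and3P[hp /eqP <- ha]] := conn1 x y x1 y1.
apply: is_component_path h2 x2 hp _.
by apply: sub_all ha => z; apply: (fsubsetP sub1).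
Qed.

Definition components (S : boxes) : {fset boxes} := [fset component S x | x in S].

Lemma in_components S C : C \in components S <-> is_component S C.
Proof.
split=> [/imfsetP[x /= xS ->]|hC]; first exact: is_component_component.
case: (hC) => sub ne _ _; have [x xC] := fset0Pn _ ne.
have xS : x \in S by apply: (fsubsetP sub).
apply/imfsetP; exists x => //.
exact: is_component_eq hC (is_component_component xS) xC (component_refl xS).
Qed.

Lemma component_sub S T x : x \in T ->
  (forall y z, y \in T -> z \in S -> adj y z -> z \in T) -> component S x `<=` T.
Proof.
move=> xT hT; apply/fsubsetP => y; rewrite in_component => /andP[_ /asboolP].
by elim=> // a c _ aT cS ac; apply: hT aT cS ac.
Qed.

Definition pos_box (x : box) : bool := (0 < x.1)%N && (0 < x.2)%N.

Lemma partition_pos L x : is_partition L -> x \in L -> pos_box x.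
Proof. by move=> hL /hL[h1 h2 _ _]; rewrite /pos_box h1 h2. Qed.

Lemma partition_up L i j : is_partition L -> (i, j) \in L -> (1 < i)%N -> (i.-1, j) \in L.
Proof. by move=> hL /hL[]. Qed.

Lemma partition_left L i j : is_partition L -> (i, j) \in L -> (1 < j)%N -> (i, j.-1) \in L.
Proof. by move=> hL /hL[]. Qed.

Lemma partition_union_closed (L L' D O : boxes) :
  is_partition L -> is_partition L' -> {subset L' <= L `|` D} -> O `<=` L' ->
  (forall x y, x \in O -> y \in D -> adj x y -> y \in O) ->
  is_partition (L `|` O).
Proof.
move=> hL hL' sL' sO hcl [i j]; rewrite in_fsetU => /orP[xL|xO].
  by case: (hL _ xL) => h1 h2 h3 h4; split=> // h; rewrite in_fsetU ?h3 ?h4.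
have close y : y \in L' -> adj (i, j) y -> y \in L `|` O.
  move=> /sL'; rewrite !in_fsetU => /orP[-> //|yD] xy.
  by rewrite (hcl _ _ xO yD xy) orbT.
case: (hL' _ (fsubsetP sO _ xO)) => /= h1 h2 h3 h4; split=> // h.
  by apply: close (h3 h) _; rewrite /adj /=; lia.
by apply: close (h4 h) _; rewrite /adj /=; lia.
Qed.

Lemma theta_set_bigcup n m (I : Type) (s : seq I) (F : I -> boxes) :
  theta_set n m (\bigcup_(i <- s) F i) = \bigcup_(i <- s) theta_set n m (F i).
Proof.
elim: s => [|a s IH]; first by rewrite !big_nil /theta_set imfset0.
by rewrite !big_cons /theta_set imfsetU -IH.
Qed.

Section Rectangle.
Variables n m : nat.
Local Notation PI := (pi_nm n m).
Local Notation th := (theta n m).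

Lemma in_piE x : (x \in PI) = in_pi n m x.
Proof.
case: x => i j; rewrite /pi_nm /in_pi inE /=.
apply/allpairsP/idP => [[[a b] /= [ha hb [-> ->]]]|/andP[hi hj]].
  by move: ha hb; rewrite !mem_iota; lia.
by exists (i, j) => /=; rewrite !mem_iota; split=> //; lia.
Qed.

Lemma theta_pi x : x \in PI -> th x \in PI.
Proof. by rewrite !in_piE /in_pi /theta; case: x => i j /=; lia. Qed.

Lemma thetaK x : x \in PI -> th (th x) = x.
Proof. by rewrite in_piE /in_pi /theta; case: x => i j /= h; congr pair; lia. Qed.

Lemma pi_theta y : y \in PI -> exists2 x, x \in PI & y = th x.
Proof. by move=> yp; exists (th y); rewrite ?theta_pi ?thetaK. Qed.

Lemma notin_pi_sub (A : boxes) x : A `<=` PI -> x \notin PI -> (x \in A) = false.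
Proof. by move=> sA; apply: contraNF; apply: (fsubsetP sA). Qed.

Definition pair_select (g : bool -> bool -> bool) (A B : boxes) : boxes :=
  [fset x in PI | g (x \in A) (th x \in B)].

Lemma in_pair_select g A B x :
  (x \in pair_select g A B) = (x \in PI) && g (x \in A) (th x \in B).
Proof. by rewrite !inE. Qed.

Lemma pair_select_sub g A B : pair_select g A B `<=` PI.
Proof. by apply/fsubsetP => x; rewrite in_pair_select => /andP[]. Qed.

Lemma adj_theta x y : x \in PI -> y \in PI -> adj (th x) (th y) = adj x y.
Proof.
rewrite !in_piE /in_pi /theta /adj; case: x => a b; case: y => c d /= h1 h2.
by apply/idP/idP; lia.
Qed.

Lemma mem_theta_set A x : A `<=` PI -> x \in PI ->
  (x \in theta_set n m A) = (th x \in A).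
Proof.
move=> sA xp; apply/imfsetP/idP => [[a /= aA ->]|h].
  by rewrite thetaK //; apply: (fsubsetP sA).
by exists (th x); rewrite // thetaK.
Qed.

Lemma theta_set_sub A : A `<=` PI -> theta_set n m A `<=` PI.
Proof.
move=> sA; apply/fsubsetP => y /imfsetP[x /= xA ->].
by apply/theta_pi/(fsubsetP sA).
Qed.

Lemma theta_setK A : A `<=` PI -> theta_set n m (theta_set n m A) = A.
Proof.
move=> sA; apply/fsetP => x; case: (boolP (x \in PI)) => xp.
  by rewrite !mem_theta_set ?theta_set_sub ?theta_pi ?thetaK.
by rewrite (notin_pi_sub sA xp) (notin_pi_sub (theta_set_sub (theta_set_sub sA)) xp).
Qed.

Lemma theta_path x p : x \in PI -> all (mem PI) p ->
  path adj x p -> path adj (th x) (map th p).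
Proof.
elim: p x => [|a p IH] x //= xp /andP[ap hp] /andP[xa pa].
by rewrite adj_theta // xa /=; apply: IH.
Qed.

Lemma theta_component S C : S `<=` PI -> is_component S C ->
  is_component (theta_set n m S) (theta_set n m C).
Proof.
move=> sS [sub ne conn hcl].
have sC : C `<=` PI by apply: fsubset_trans sS.
split.
- by apply: subset_imfset; apply/fsubsetP.
- by have [x xC] := fset0Pn _ ne; apply/fset0Pn; exists (th x); apply/imfsetP; exists x.
- move=> _ _ /imfsetP[x /= xC ->] /imfsetP[y /= yC ->].
  have [p /and3P[hp /eqP hl ha]] := conn x y xC yC.
  have pp : all (mem PI) p by apply: sub_all ha => z; apply: (fsubsetP sC).
  exists (map th p); rewrite theta_path ?(fsubsetP sC) //= last_map hl eqxx /=.
  by rewrite all_map; apply: sub_all ha => z zC /=; apply/imfsetP; exists z.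
- move=> _ _ /imfsetP[x /= xC ->] /imfsetP[y /= yS ->].
  rewrite adj_theta ?(fsubsetP sC x) ?(fsubsetP sS y) // => xy.
  by apply/imfsetP; exists y; first exact: hcl xy.
Qed.

Lemma partition_theta_down M i j : is_partition M -> (i, j) \in PI ->
  th (i, j) \in M -> (i < n)%N -> th (i.+1, j) \in M.
Proof.
move=> hM; rewrite in_piE /in_pi /theta /= => hp h hi.
have := partition_up hM h; rewrite (_ : (n - i + 1).-1 = n - i.+1 + 1)%N; last by lia.
by apply; lia.
Qed.

Lemma partition_theta_right M i j : is_partition M -> (i, j) \in PI ->
  th (i, j) \in M -> (j < m)%N -> th (i, j.+1) \in M.
Proof.
move=> hM; rewrite in_piE /in_pi /theta /= => hp h hj.
have := partition_left hM h; rewrite (_ : (m - j + 1).-1 = m - j.+1 + 1)%N; last by lia.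
by apply; lia.
Qed.

Lemma partition_select (g : bool -> bool -> bool) (A B : boxes) :
  is_partition A -> is_partition B ->
  (forall l l' u u' : bool, (l -> l') -> (u' -> u) -> g l u -> g l' u') ->
  is_partition (pair_select g A B).
Proof.
move=> hA hB hg [i j]; rewrite in_pair_select => /andP[hp hx].
have hp' := hp; rewrite in_piE /in_pi /= in hp'.
split=> /= [||hi|hj]; try lia; rewrite in_pair_select in_piE /in_pi /=.
- apply/andP; split; first lia.
  apply: hg hx => [|h]; first by move=> h; apply: partition_up.
  have := partition_theta_down hB _ h; rewrite prednK; last lia.
  by apply; [rewrite in_piE /in_pi /=; lia | lia].
- apply/andP; split; first lia.
  apply: hg hx => [|h]; first by move=> h; apply: partition_left.
  have := partition_theta_right hB _ h; rewrite prednK; last lia.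
  by apply; [rewrite in_piE /in_pi /=; lia | lia].
Qed.

End Rectangle.

Lemma powsum_perm_eq (F : numDomainType) (s t : seq F) :
  (forall i, \sum_(z <- s) z ^+ i = \sum_(z <- t) z ^+ i)%R -> perm_eq s t.
Proof.
move=> hst; apply/allP => z0 _ /=; rewrite -(eqr_nat F).
(* [L] vanishes on [s ++ t] except at [z0]; pairing it with the power sums counts [z0]. *)
pose L := (\prod_(z <- undup (s ++ t) | z != z0) ('X - z%:P))%R.
have sumL v : {subset v <= s ++ t} ->
    (\sum_(z <- v) L.[z] = (count_mem z0 v)%:R * L.[z0])%R.
  elim: v => [|a v IH] /= sv; first by rewrite big_nil mul0r.
  rewrite big_cons IH => [|z zv]; last by apply: sv; rewrite inE zv orbT.
  rewrite natrD mulrDl; congr (_ + _)%R; have [->|az0] := eqVneq a z0.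
    by rewrite mul1r.
  rewrite mul0r horner_prod; apply/eqP; rewrite prodf_seq_eq0; apply/hasP.
  exists a; first by rewrite mem_undup sv ?mem_head.
  by rewrite az0 !hornerE subrr.
have sum_coef v : (\sum_(z <- v) L.[z] = \sum_(j < size L) L`_j * \sum_(z <- v) z ^+ j)%R.
  under eq_bigr do rewrite horner_coef.
  by rewrite exchange_big /=; apply: eq_bigr => j _; rewrite mulr_sumr.
have L0 : (L.[z0] != 0)%R.
  rewrite horner_prod prodf_seq_neq0; apply/allP => z _; apply/implyP => zz0.
  by rewrite !hornerE subr_eq0 eq_sym.
have ss : {subset s <= s ++ t} by move=> z zs; rewrite mem_cat zs.
have st : {subset t <= s ++ t} by move=> z zt; rewrite mem_cat zt orbT.
rewrite -(inj_eq (mulIf L0)) -(sumL s ss) -(sumL t st).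
by rewrite !sum_coef; apply/eqP; apply: eq_bigr => j _; rewrite hst.
Qed.

Lemma count_mem_map_inj (T : eqType) (f : box -> T) (A : boxes) x :
  injective f -> count_mem (f x) (map f A) = (x \in A).
Proof.
move=> finj; rewrite count_map -(count_uniq_mem _ (fset_uniq A)).
by apply: eq_count => y /=; rewrite inj_eq.
Qed.

Section LatticePoints.
Variables n m : nat.
Local Notation PI := (pi_nm n m).
Local Notation th := (theta n m).
Local Open Scope ring_scope.

Definition lam_pt (x : box) : int * int := (x.2%:Z - 1, x.1%:Z - 1).
Definition mu_pt (y : box) : int * int := (m%:Z - y.2%:Z, n%:Z - y.1%:Z).

Lemma lam_pt_inj : injective lam_pt.
Proof. by case=> a b [c d] [e1 e2]; congr pair; lia. Qed.

Lemma mu_pt_inj : injective mu_pt.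
Proof. by case=> a b [c d] [e1 e2]; congr pair; lia. Qed.

Lemma lam_pt_theta x : x \in PI -> lam_pt x = mu_pt (th x).
Proof. by rewrite in_piE /in_pi /lam_pt /mu_pt /theta; case: x => a b /= h; congr pair; lia. Qed.

Lemma lam_pt_eq_mu_pt x y : pos_box x -> pos_box y ->
  lam_pt x = mu_pt y -> (x \in PI) && (y \in PI).
Proof.
by rewrite !in_piE /in_pi /pos_box; case: x => a b; case: y => c d /= h h' [e1 e2]; lia.
Qed.

Definition pts (a b : bipart) : seq (int * int) := map lam_pt a.1 ++ map mu_pt b.2.

Lemma count_pts a b x : x \in PI ->
  count_mem (lam_pt x) (pts a b) = ((x \in a.1) + (th x \in b.2))%N.
Proof.
move=> xp; rewrite count_cat count_mem_map_inj; last exact: lam_pt_inj.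
by rewrite lam_pt_theta // count_mem_map_inj //; apply: mu_pt_inj.
Qed.

Lemma mem_pts a b z : a.1 `<=` PI -> b.2 `<=` PI -> z \in pts a b ->
  exists2 x, x \in PI & z = lam_pt x.
Proof.
move=> sa sb; rewrite mem_cat => /orP[]/mapP[x xin ->].
  by exists x => //; apply: (fsubsetP sa).
have xp := fsubsetP sb x xin.
by exists (th x); rewrite ?theta_pi // lam_pt_theta ?theta_pi // thetaK.
Qed.

Definition balanced (a b : bipart) : Prop :=
  forall x, x \in PI -> ((x \in a.1) + (th x \in b.2) = (x \in b.1) + (th x \in a.2))%N.

Lemma pts_sub_pi a b : in_Pnm n m a -> is_bipartition b ->
  perm_eq (pts a b) (pts b a) -> b.1 `<=` PI /\ b.2 `<=` PI.
Proof.
move=> [_ [sa1 sa2]] [hb1 hb2] /perm_mem hp.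
have pos1 := partition_pos hb1; have pos2 := partition_pos hb2.
split; apply/fsubsetP.
  move=> x xb; have : lam_pt x \in pts a b by rewrite hp mem_cat map_f.
  rewrite mem_cat (mem_map lam_pt_inj) => /orP[/(fsubsetP sa1) // | /mapP[y yb]].
  by move/lam_pt_eq_mu_pt => /(_ (pos1 _ xb) (pos2 _ yb)) /andP[].
move=> y yb; have : mu_pt y \in pts b a by rewrite -hp mem_cat map_f ?orbT.
rewrite mem_cat (mem_map mu_pt_inj) => /orP[/mapP[x xb] | /(fsubsetP sa2) //].
by move/esym/lam_pt_eq_mu_pt => /(_ (pos1 _ xb) (pos2 _ yb)) /andP[].
Qed.

Definition admissible (a b : bipart) : Prop := in_Pnm n m b /\ balanced a b.

Lemma perm_eq_pts a b : in_Pnm n m a -> is_bipartition b ->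
  perm_eq (pts a b) (pts b a) <-> admissible a b.
Proof.
move=> ha hb; split=> [hp|[[_ [sb1 sb2]] bal]].
  have [sb1 sb2] := pts_sub_pi ha hb hp.
  split=> // x xp; rewrite -!count_pts //.
  by move/permP: hp => /(_ (pred1 (lam_pt x))).
case: ha => _ [sa1 sa2]; apply/allP => z; rewrite mem_cat.
by case/orP=> /mem_pts[] // x xp -> /=; rewrite !count_pts // bal.
Qed.

End LatticePoints.

Section Contents.
Variable R : realType.
Variable k : complex R.
Hypothesis k_irr : forall q : rat, k != ratr q.
Local Open Scope ring_scope.

Definition zk (z : int * int) : complex R := z.1%:~R + k * z.2%:~R.

Lemma k_neq0 : k != 0.
Proof. by have := k_irr 0; rewrite rmorph0. Qed.

Lemma zk_inj : injective zk.
Proof.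
case=> a b [a' b']; rewrite /zk /= => e.
have e2 : (a - a')%:~R = k * (b' - b)%:~R :> complex R.
  rewrite !intrB; transitivity (a%:~R + k * b%:~R - (a'%:~R + k * b%:~R) : complex R).
    by ring.
  by rewrite e; ring.
have [hb|hb] := eqVneq (b' - b) 0.
  move: e2; rewrite hb mulr0 => /eqP; rewrite intr_eq0 subr_eq0 => /eqP ->.
  by move/eqP: hb; rewrite subr_eq0 => /eqP ->.
have := k_irr ((a - a')%:~R / (b' - b)%:~R).
by rewrite fmorph_div !rmorph_int e2 mulfK ?eqxx // intr_eq0.
Qed.

Lemma cont_lam_pt x : pos_box x -> cont k x 0 = zk (lam_pt x).
Proof.
case/andP=> h1 h2; rewrite /cont /zk /= addr0 !intrB.
by rewrite -!(natrB _ (_ : 1 <= _)%N) ?subn1.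
Qed.

Lemma cont_mu_pt n m y : pos_box y ->
  cont k y (1 + k - k * (n%:R + k^-1 * m%:R)) = - zk (mu_pt n m y).
Proof.
case: y => [[|i] [|j]] // _; rewrite /cont /zk /= !intrB -!pmulrn !mulrSr.
rewrite mulrDr mulrA mulfV ?k_neq0 // mul1r; ring.
Qed.

Lemma bpowS n m (a : bipart) i : is_bipartition a ->
  bpow i.+1 a k (n%:R + k^-1 * m%:R) =
  \sum_(z <- map lam_pt a.1) zk z ^+ i - \sum_(z <- map (mu_pt n m) a.2) zk z ^+ i.
Proof.
case=> ha1 ha2; rewrite /bpow !big_map mulr_sumr -sumrN; congr (_ + _).
  by apply: eq_big_seq => x /(partition_pos ha1) /cont_lam_pt ->.
apply: eq_big_seq => y /(partition_pos ha2) /(cont_mu_pt n m) ->.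
by rewrite exprS mulN1r mulNr -exprMn mulN1r opprK.
Qed.

Lemma Eequiv_perm_eq n m (a b : bipart) : is_bipartition a -> is_bipartition b ->
  Eequiv k (n%:R + k^-1 * m%:R) a b <-> perm_eq (pts n m a b) (pts n m b a).
Proof.
move=> ha hb.
have sums i : (bpow i.+1 a k (n%:R + k^-1 * m%:R) == bpow i.+1 b k (n%:R + k^-1 * m%:R))
    = (\sum_(z <- map zk (pts n m a b)) z ^+ i == \sum_(z <- map zk (pts n m b a)) z ^+ i).
  by rewrite !bpowS // !big_map /pts !big_cat !big_map subr_eq addrAC eq_sym subr_eq eq_sym.
split=> [he|hp [//|i] _].
  apply: (perm_map_inj zk_inj); apply: powsum_perm_eq => i.
  by apply/eqP; rewrite -sums; apply/eqP; apply: he.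
by apply/eqP; rewrite sums (perm_big _ (perm_map zk hp)).
Qed.

Lemma Eclass_admissible n m (a b : bipart) : in_Pnm n m a ->
  is_bipartition b /\ Eequiv k (n%:R + k^-1 * m%:R) a b <-> admissible n m a b.
Proof.
move=> ha; have ha' : is_bipartition a by case: ha.
split=> [[hb /(Eequiv_perm_eq n m ha' hb) hp]|hab]; first exact/perm_eq_pts.
have hb : is_bipartition b by case: hab => [[]].
by split=> //; apply/(Eequiv_perm_eq n m ha' hb)/perm_eq_pts.
Qed.

End Contents.

Lemma famUP r (F : 'I_r -> boxes) (A : {set 'I_r}) x :
  reflect (exists2 i, i \in A & x \in F i) (x \in famU F A).
Proof.
apply: (iffP (@bigfcupP _ _ (enum A) x F xpredT)) => [[i /andP[iA _] xi]|[i iA xi]].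
  by exists i; rewrite // -mem_enum.
by exists i; rewrite // mem_enum iA.
Qed.

Lemma famU_sub r S (F : 'I_r -> boxes) (A : {set 'I_r}) :
  (forall i, F i `<=` S) -> famU F A `<=` S.
Proof. by move=> hF; apply/fsubsetP => x /famUP[i _ /(fsubsetP (hF i))]. Qed.

Lemma famU_closed r S (F : 'I_r -> boxes) (A : {set 'I_r}) :
  (forall i, is_component S (F i)) ->
  forall x y, x \in famU F A -> y \in S -> adj x y -> y \in famU F A.
Proof.
move=> hF x y /famUP[i iA xi] yS xy; apply/famUP; exists i => //.
by case: (hF i) => _ _ _ hcl; apply: hcl xy.
Qed.

Ltac case_mem := repeat match goal with |- context[?x \in ?A] => case: (x \in A) end.

Section Class.
Variables n m : nat.
Variable alpha : bipart.
Hypothesis alpha_in : in_Pnm n m alpha.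
Local Notation PI := (pi_nm n m).
Local Notation th := (theta n m).
Local Notation select := (pair_select n m).
Local Notation admissible := (admissible n m alpha).

Definition both (b : bipart) : boxes := b.1 `&` theta_set n m b.2.

Definition alpha_select (g : bool -> bool -> bool) : bipart :=
  (select g alpha.1 alpha.2, select g alpha.2 alpha.1).
Definition alpha_min : bipart := alpha_select (fun l u => l && ~~ u).
Definition alpha_max : bipart := alpha_select (fun l u => l || ~~ u).

Definition free_boxes : boxes := select (fun l u => l == u) alpha.1 alpha.2.

Lemma free_sub_pi : free_boxes `<=` PI.
Proof. exact: pair_select_sub. Qed.

Lemma mem_both b x : b.1 `<=` PI -> b.2 `<=` PI ->
  (x \in both b) = [&& x \in PI, x \in b.1 & th x \in b.2].
Proof.
move=> s1 s2; rewrite in_fsetI; case: (boolP (x \in PI)) => xp.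
  by rewrite mem_theta_set.
by rewrite (notin_pi_sub s1 xp).
Qed.

Lemma admissible_eq b b' : admissible b -> admissible b' -> both b = both b' -> b = b'.
Proof.
move=> [[_ [s1 s2]] hb] [[_ [s1' s2']] hb'] e.
have key x : x \in PI -> ((x \in b.1) = (x \in b'.1)) /\ ((th x \in b.2) = (th x \in b'.2)).
  move=> xp; have := congr1 (fun A => x \in A) e; rewrite /= !mem_both // xp /=.
  by move: (hb x xp) (hb' x xp); case_mem.
rewrite [b]surjective_pairing [b']surjective_pairing.
congr pair; apply/fsetP => x; case: (boolP (x \in PI)) => xp.
- by case: (key x xp).
- by rewrite (notin_pi_sub s1 xp) (notin_pi_sub s1' xp).
- by have [y yp ->] := pi_theta xp; case: (key y yp).
- by rewrite (notin_pi_sub s2 xp) (notin_pi_sub s2' xp).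
Qed.

Lemma admissible_alpha_select (g : bool -> bool -> bool) :
  (forall l l' u u' : bool, (l -> l') -> (u' -> u) -> g l u -> g l' u') ->
  (forall l u : bool, l + g u l = g l u + u)%N ->
  admissible (alpha_select g).
Proof.
move=> g_mono g_bal; have [[pa1 pa2] _] := alpha_in.
split; first split; first by split; apply: partition_select.
  by split; apply: pair_select_sub.
by move=> x xp /=; rewrite !in_pair_select theta_pi // thetaK // xp; apply: g_bal.
Qed.

Lemma admissible_min : admissible alpha_min.
Proof.
apply: admissible_alpha_select => [l l' u u' hl hu /andP[/hl -> /(contra hu) ->] //|].
by case; case.
Qed.

Lemma admissible_max : admissible alpha_max.
Proof.
apply: admissible_alpha_select => [l l' u u' hl hu /orP[/hl -> // | /(contra hu) ->]|].
  by rewrite orbT.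
by case; case.
Qed.

Lemma both_min : both alpha_min = fset0.
Proof.
apply/fsetP => x; rewrite in_fset0 mem_both ?pair_select_sub // !in_pair_select.
by case: (boolP (x \in PI)) => //= xp; rewrite theta_pi // thetaK //; case_mem.
Qed.

Lemma both_max : both alpha_max = free_boxes.
Proof.
apply/fsetP => x; rewrite mem_both ?pair_select_sub // !in_pair_select.
by case: (boolP (x \in PI)) => //= xp; rewrite theta_pi // thetaK //; case_mem.
Qed.

Lemma both_sub_free b : admissible b -> both b `<=` free_boxes.
Proof.
move=> [[_ [s1 s2]] hb]; apply/fsubsetP => x.
rewrite mem_both // in_pair_select => /and3P[xp x1 x2]; rewrite xp /=.
by move: (hb x xp) x1 x2; case_mem.
Qed.

Lemma admissible_bounds b : admissible b -> bsubset alpha_min b && bsubset b alpha_max.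
Proof.
move=> [[_ [s1 s2]] hb]; rewrite /bsubset /=.
rewrite -!andbA; apply/and4P; split; apply/fsubsetP.
- by move=> x; rewrite in_pair_select => /andP[xp]; move: (hb x xp); case_mem.
- move=> y; rewrite in_pair_select => /andP[yp]; move: (hb _ (theta_pi yp)).
  by rewrite thetaK //; case_mem.
- move=> x xb; have xp := fsubsetP s1 _ xb; rewrite in_pair_select xp /=.
  by move: (hb x xp) xb; case_mem.
- move=> y yb; have yp := fsubsetP s2 _ yb; rewrite in_pair_select yp /=.
  by move: (hb _ (theta_pi yp)) yb; rewrite thetaK //; case_mem.
Qed.

Lemma admissible_eq_min b : admissible b ->
  b = alpha_min <-> b.1 `&` theta_set n m b.2 = fset0.
Proof.
move=> hb; split=> [->|h]; first exact: both_min.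
by apply: admissible_eq hb admissible_min _; rewrite both_min.
Qed.

Lemma admissible_eq_max b : admissible b ->
  b = alpha_max <-> b.1 `|` theta_set n m b.2 = PI.
Proof.
move=> hb; split=> [->|h].
  have [s1 s2] : alpha_max.1 `<=` PI /\ alpha_max.2 `<=` PI by split; apply: pair_select_sub.
  apply/fsetP => x; rewrite in_fsetU; case: (boolP (x \in PI)) => xp.
    rewrite mem_theta_set // !in_pair_select theta_pi // thetaK // xp /=.
    by case_mem.
  by rewrite (notin_pi_sub s1 xp) (notin_pi_sub (theta_set_sub s2) xp).
apply: (admissible_eq hb admissible_max); apply/eqP.
rewrite both_max eqEfsubset both_sub_free //; case: hb => [[_ [s1 s2]] hb].
apply/fsubsetP => x; rewrite in_pair_select mem_both // => /andP[xp xfree].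
have := xp; rewrite -{1}h in_fsetU mem_theta_set // xp /=.
by move: (hb x xp) xfree; case_mem.
Qed.

Lemma lam_max_diff : alpha_max.1 `\` alpha_min.1 = free_boxes.
Proof. by apply/fsetP => x; rewrite in_fsetD !in_pair_select; case: (x \in PI); case_mem. Qed.

Lemma mu_max_diff : alpha_max.2 `\` alpha_min.2 = theta_set n m free_boxes.
Proof.
apply/fsetP => y; rewrite in_fsetD; case: (boolP (y \in PI)) => yp.
  by rewrite mem_theta_set ?free_sub_pi // !in_pair_select theta_pi // thetaK // yp; case_mem.
by rewrite (notin_pi_sub (theta_set_sub free_sub_pi) yp) !in_pair_select (negbTE yp) andbF.
Qed.

Definition free_components : seq boxes := enum_fset (components free_boxes).
Definition ncomp : nat := size free_components.
Definition nu (i : 'I_ncomp) : boxes := nth fset0 free_components i.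
Definition tau (i : 'I_ncomp) : boxes := theta_set n m (nu i).
Definition union_of (A : {set 'I_ncomp}) : bipart :=
  bunion alpha_min (famU nu A, famU tau A).

Lemma nu_component i : is_component free_boxes (nu i).
Proof. by apply/in_components/mem_nth. Qed.

Lemma is_component_free C : is_component free_boxes C <-> exists i, C = nu i.
Proof.
split=> [/in_components hC|[i ->]]; last exact: nu_component.
have hi : (index C free_components < ncomp)%N by rewrite index_mem.
by exists (Ordinal hi); rewrite /nu nth_index.
Qed.

Lemma nu_inj : injective nu.
Proof. by move=> i j /eqP; rewrite /nu nth_uniq ?fset_uniq // => /eqP /val_inj. Qed.

Lemma nu_sub_free i : nu i `<=` free_boxes.
Proof. by case: (nu_component i). Qed.

Lemma nu_sub_pi i : nu i `<=` PI.
Proof. exact: fsubset_trans (nu_sub_free i) free_sub_pi. Qed.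

Lemma is_component_theta_free C :
  is_component (theta_set n m free_boxes) C <-> exists i, C = tau i.
Proof.
have sF := theta_set_sub free_sub_pi.
split=> [hC|[i ->]]; last exact: theta_component free_sub_pi (nu_component i).
have sC : C `<=` PI by case: hC => sub _ _ _; apply: fsubset_trans sub sF.
have := theta_component sF hC; rewrite theta_setK ?free_sub_pi // => /is_component_free[i hi].
by exists i; rewrite /tau -hi theta_setK.
Qed.

Lemma tau_component i : is_component (theta_set n m free_boxes) (tau i).
Proof. by apply/is_component_theta_free; exists i. Qed.

Lemma tau_inj : injective tau.
Proof.
move=> i j /(congr1 (theta_set n m)).
by rewrite /tau !theta_setK ?nu_sub_pi //; apply: nu_inj.
Qed.

Lemma famU_tau A : famU tau A = theta_set n m (famU nu A).
Proof. by rewrite /famU theta_set_bigcup. Qed.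

Lemma famU_nu_inj : injective (famU nu).
Proof.
suff sub A B i : famU nu A = famU nu B -> i \in A -> i \in B.
  by move=> A B e; apply/setP => i; apply/idP/idP; apply: sub.
move=> e iA; case: (nu_component i) => _ /fset0Pn[x xi] _ _.
have /famUP[j jB xj] : x \in famU nu B by rewrite -e; apply/famUP; exists i.
by rewrite (nu_inj (is_component_eq (nu_component i) (nu_component j) xi xj)).
Qed.

Lemma admissible_union_of A : admissible (union_of A).
Proof.
have sO : famU nu A `<=` free_boxes by apply: famU_sub nu_sub_free.
have sO' : famU tau A `<=` theta_set n m free_boxes.
  by apply: famU_sub => i; case: (tau_component i).
have [[[pm1 pm2] _] _] := admissible_min.
have [[[pM1 pM2] _] _] := admissible_max.
split; first split; first split.
- apply: (partition_union_closed pm1 pM1 _ _ (famU_closed nu_component)).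
    by move=> x xM; rewrite in_fsetU -lam_max_diff in_fsetD xM andbT orbN.
  by apply: fsubset_trans sO _; rewrite -lam_max_diff fsubsetDl.
- apply: (partition_union_closed pm2 pM2 _ _ (famU_closed tau_component)).
    by move=> y yM; rewrite in_fsetU -mu_max_diff in_fsetD yM andbT orbN.
  by apply: fsubset_trans sO' _; rewrite -mu_max_diff fsubsetDl.
- split; rewrite /= fsubUset pair_select_sub /=.
    exact: fsubset_trans sO free_sub_pi.
  exact: fsubset_trans sO' (theta_set_sub free_sub_pi).
move=> x xp /=; rewrite famU_tau !in_fsetU mem_theta_set ?theta_pi //; last first.
  exact: fsubset_trans sO free_sub_pi.
rewrite !in_pair_select theta_pi // thetaK // xp /=.
case: (boolP (x \in famU nu A)) => xO; last by case_mem.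
by move: (fsubsetP sO x xO); rewrite in_pair_select => /andP[_]; case_mem.
Qed.

Lemma both_union_of A : both (union_of A) = famU nu A.
Proof.
have [[_ [s1 s2]] _] := admissible_union_of A.
have sO : famU nu A `<=` PI by apply: famU_sub nu_sub_pi.
apply/fsetP => x; rewrite mem_both //; case: (boolP (x \in PI)) => xp /=; last first.
  by rewrite (notin_pi_sub sO xp).
rewrite !in_fsetU famU_tau mem_theta_set ?theta_pi // thetaK //.
rewrite !in_pair_select theta_pi // thetaK // xp /=.
by case: (boolP (x \in famU nu A)) => xO; rewrite ?orbT //; case_mem.
Qed.

Lemma both_closed b x y : admissible b -> x \in both b -> y \in free_boxes ->
  adj x y -> y \in both b.
Proof.
move=> [[[hb1 hb2] [s1 s2]] hb]; rewrite !mem_both // in_pair_select.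
case/and3P=> xp x1 x2 /andP[yp yfree] xy; rewrite yp /=.
suff : (y \in b.1) || (th y \in b.2) by move: (hb y yp) yfree; case_mem.
have ypi := yp; rewrite in_piE /in_pi in ypi.
case: x xy xp x1 x2 => i j; case: y yp yfree ypi => i' j' yp _ /= ypi.
rewrite /adj /= => /orP[/andP[/eqP ei /orP[]]|/andP[/eqP ej /orP[]]] /eqP e xp x1 x2; subst.
- by apply/orP; left; apply: (partition_left hb1 x1); lia.
- by apply/orP; right; apply: (partition_theta_right hb2 xp x2); lia.
- by apply/orP; left; apply: (partition_up hb1 x1); lia.
- by apply/orP; right; apply: (partition_theta_down hb2 xp x2); lia.
Qed.

Lemma admissibleE b : admissible b -> exists A, b = union_of A.
Proof.
move=> hb; have sF := fsubsetP (both_sub_free hb).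
exists [set i | nu i `<=` both b].
apply: (admissible_eq hb (admissible_union_of _)); rewrite both_union_of.
apply/fsetP => x; apply/idP/famUP => [xb | [i iA xi]].
  have /is_component_free[i ei] := is_component_component (sF x xb).
  exists i; last by rewrite -ei component_refl // sF.
  rewrite inE -ei; apply: component_sub xb _ => y z yb zF yz.
  exact: both_closed hb yb zF yz.
by move: iA; rewrite inE => /fsubsetP; apply.
Qed.

Lemma union_of_inj : injective union_of.
Proof. by move=> A B e; apply: famU_nu_inj; rewrite -!both_union_of e. Qed.

Lemma admissible_enum : exists s : seq bipart,
  [/\ uniq s, size s = (2 ^ ncomp)%N & forall b, admissible b <-> b \in s].
Proof.
exists [seq union_of A | A <- enum (powerset [set: 'I_ncomp])]; split.
- by rewrite map_inj_uniq ?enum_uniq //; apply: union_of_inj.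
- by rewrite size_map -cardE card_powerset cardsT card_ord.
move=> b; split=> [/admissibleE[A ->]|/mapP[A _ ->]]; last exact: admissible_union_of.
by apply: map_f; rewrite mem_enum powersetE subsetT.
Qed.

End Class.

Unset Implicit Arguments.

Theorem mainTheorem3 (R : realType) (k : complex R)
  (hk : forall q : rat, k != ratr q) (n m : nat) (hn : (0 < n)%N) (hm : (0 < m)%N)
  (alpha : bipart) (halpha : in_Pnm n m alpha) :
  let p0 : complex R := (n%:R + k^-1 * m%:R)%R in
  let E := fun beta : bipart => is_bipartition beta /\ Eequiv k p0 alpha beta in
  (forall beta, E beta -> in_Pnm n m beta) /\
  exists alpha_m alpha_M : bipart,
    [/\ E alpha_m /\ E alpha_M,
        (forall beta, E beta -> bsubset alpha_m beta && bsubset beta alpha_M),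
        (forall beta, E beta ->
           (beta = alpha_m <-> beta.1 `&` theta_set n m beta.2 = fset0)),
        (forall beta, E beta ->
           (beta = alpha_M <-> beta.1 `|` theta_set n m beta.2 = pi_nm n m)) &
    exists (r : nat) (nu tau : 'I_r -> boxes),
      [/\ (forall C, is_component (alpha_M.1 `\` alpha_m.1) C <-> exists i, C = nu i),
          (forall C, is_component (alpha_M.2 `\` alpha_m.2) C <-> exists i, C = tau i),
          injective nu /\ injective tau,
          (forall i, [/\ nu i `<=` pi_nm n m, tau i `<=` pi_nm n m &
                         theta_set n m (nu i) = tau i]) &
          [/\ (forall A : {set 'I_r}, E (bunion alpha_m (famU nu A, famU tau A))),
              (forall beta, E beta -> exists A : {set 'I_r},
                  beta = bunion alpha_m (famU nu A, famU tau A)),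
              (forall A B : {set 'I_r},
                  bunion alpha_m (famU nu A, famU tau A) =
                  bunion alpha_m (famU nu B, famU tau B) -> A = B) &
              exists s : seq bipart,
                [/\ uniq s, size s = (2 ^ r)%N & forall beta, E beta <-> beta \in s]]]].
Proof.
move=> p0 E.
have EA b : E b <-> admissible n m alpha b := Eclass_admissible hk b halpha.
split; first by move=> b /EA[].
exists (alpha_min n m alpha), (alpha_max n m alpha); split.
- by split; apply/EA; [apply: admissible_min | apply: admissible_max].
- by move=> b /EA; apply: admissible_bounds.
- by move=> b /EA; apply: admissible_eq_min.
- by move=> b /EA; apply: admissible_eq_max.
exists (ncomp n m alpha), (@nu n m alpha), (@tau n m alpha); split.
- by move=> C; rewrite lam_max_diff; apply: is_component_free.
- by move=> C; rewrite mu_max_diff; apply: is_component_theta_free.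
- by split; [apply: nu_inj | apply: tau_inj].
- by move=> i; split; [apply: nu_sub_pi | apply/theta_set_sub/nu_sub_pi | ].
split.
- by move=> A; apply/EA; apply: admissible_union_of.
- by move=> b /EA /(admissibleE halpha)[A ->]; exists A.
- by move=> A B; apply: union_of_inj.
have [s [s_uniq s_size s_mem]] := admissible_enum halpha.
by exists s; split=> // b; rewrite EA.
Qed.
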